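(* Let $f_0:\mathbb{R}^n\to\mathbb{R}$ be lower semicontinuous, proper and strictly convex, let $\mathcal{Y}\subseteq\mathbb{R}^n$ be convex and compact, let $f=f_0+\delta_{\mathcal{Y}}$, and let $\mathbf{A}\in\mathbb{R}^{m\times n}$ with $m<n$ and $\operatorname{rank}\mathbf{A}=m$, and $\mathbf{b}\in\mathbb{R}^m$. Assume that for every $\bar{\mathbf{y}}\in\operatorname{bnd}\mathcal{Y}$ there exist a sequence $(\mathbf{y}_k)$ in $\mathcal{Y}$ with $\mathbf{y}_k\to\bar{\mathbf{y}}$ and subgradients $\boldsymbol{\nu}_k\in\partial f(\mathbf{y}_k)$ with $\limsup_k\|\boldsymbol{\nu}_k\|_2<\infty$. Let $\mathcal{V}=\operatorname{cl}\{\boldsymbol{\nu}\in\partial f_0(\mathbf{y}) \;|\; \mathbf{y}\in\operatorname{int}\mathcal{Y}\}$, and assume there exist $\boldsymbol{\nu}\in\mathbb{R}^n\setminus\operatorname{int}\mathcal{V}$ and $\boldsymbol{\eta}\in\mathbb{R}^n$ such that for all $\alpha\ge0$: $\boldsymbol{\nu}+\alpha\boldsymbol{\eta}\in\mathbb{R}^n\setminus\operatorname{int}\mathcal{V}$, $\nabla f^*(\boldsymbol{\nu}+\alpha\boldsymbol{\eta})$ does not depend on $\alpha$, and the ray $\{\boldsymbol{\nu}+\alpha\boldsymbol{\eta}\mid\alpha\ge0\}$ is contained in the range $R(\mathbf{A}^{\mathsf T})$ of $\mathbf{A}^{\mathsf T}$. Let $g:\mathbb{R}^m\to\mathbb{R}$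 be the dual function $$g(\boldsymbol{\lambda})=\inf_{\mathbf{y}\in\mathbb{R}^n}\big(f(\mathbf{y})-\boldsymbol{\lambda}^{\mathsf T}(\mathbf{A}\mathbf{y}-\mathbf{b})\big)=-f^*(\mathbf{A}^{\mathsf T}\boldsymbol{\lambda})+\mathbf{b}^{\mathsf T}\boldsymbol{\lambda}.$$ Then there exist $\boldsymbol{\lambda}\in\mathbb{R}^m$ and $\boldsymbol{\mu}\in\mathbb{R}^m$ such that $\nabla g(\boldsymbol{\lambda}+\alpha\boldsymbol{\mu})$ is the same vector for all $\alpha\ge0$.
   Context: $\delta_{\mathcal{Y}}$ is the indicator function of $\mathcal{Y}$; $f^*(\boldsymbol{\nu})=\sup_{\mathbf{x}\in\operatorname{dom}f}(\boldsymbol{\nu}^{\mathsf T}\mathbf{x}-f(\mathbf{x}))$ is the convex conjugate of $f$, which under these hypotheses is finite and differentiable on $\mathbb{R}^n$ (so $g$ is differentiable). $\partial$ is the convex subdifferential; $\operatorname{cl},\operatorname{int},\operatorname{bnd}$ denote closure, interior, boundary. *)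

From HB Require Import structures.
From mathcomp Require Import all_boot all_order all_algebra.
From mathcomp Require Import all_classical all_reals all_analysis.
Set Implicit Arguments. Unset Strict Implicit. Unset Printing Implicit Defensive.
Import Order.TTheory GRing.Theory Num.Theory.
Import numFieldNormedType.Exports.
Local Open Scope classical_set_scope.
Local Open Scope ring_scope.

Section Defs.
Variable R : realType.

Definition dotv n (u v : 'cV[R]_n) : R := \sum_(i < n) u i 0 * v i 0.
Definition norm2 n (v : 'cV[R]_n) : R := Num.sqrt (dotv v v).

Definition strictly_convex n (f : 'cV[R]_n -> R) :=
  forall x y (t : R), x != y -> 0 < t -> t < 1 ->
    f (t *: x + (1 - t) *: y) < t * f x + (1 - t) * f y.

Definition convex_setv n (Y : set 'cV[R]_n) :=
  forall x y (t : R), Y x -> Y y -> 0 <= t -> t <= 1 ->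
    Y (t *: x + (1 - t) *: y).

Definition indic_sum n (f0 : 'cV[R]_n -> R) (Y : set 'cV[R]_n) :
  'cV[R]_n -> \bar R :=
  fun y => if `[< Y y >] then (f0 y)%:E else +oo%E.

Definition subdiff n (F : 'cV[R]_n -> \bar R) (y : 'cV[R]_n) : set 'cV[R]_n :=
  [set nu | F y \is a fin_num /\
            forall x, (F y + (dotv nu (x - y))%:E <= F x)%E].

(* convex conjugate  f^*(nu) = sup_{x in dom F} (nu^T x - F x), as a real number
   (it is finite under the hypotheses of the statement) *)
Definition conj_fun n (F : 'cV[R]_n -> \bar R) (nu : 'cV[R]_n) : R :=
  fine (ereal_sup [set ((dotv nu x)%:E - F x)%E | x in [set x | F x \is a fin_num]]).

Definition dual_fun m n (F : 'cV[R]_n -> \bar R) (A : 'M[R]_(m, n))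
  (b : 'cV[R]_m) (lam : 'cV[R]_m) : R :=
  fine (ereal_inf [set (F y - (dotv lam (A *m y - b))%:E)%E | y in setT]).

Definition is_gradient n (F : 'cV[R]_n -> R) (x G : 'cV[R]_n) :=
  forall eps : R, 0 < eps -> exists2 delta : R, 0 < delta &
    forall h, norm2 h < delta ->
      `|F (x + h) - F x - dotv G h| <= eps * norm2 h.

End Defs.

From HB Require Import structures.
From mathcomp Require Import all_boot all_order all_algebra.
From mathcomp Require Import all_classical all_reals all_analysis.
From mathcomp Require Import lra ring.
Set Implicit Arguments. Unset Strict Implicit. Unset Printing Implicit Defensive.
Import Order.TTheory GRing.Theory Num.Theory.
Import numFieldNormedType.Exports.
Local Open Scope classical_set_scope.
Local Open Scope ring_scope.

(* Since [Y] is compact and [f0] is lower semicontinuous, [f = f0 + delta_Y]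
   has a finite conjugate, and the dual function is
   [g lam = b^T lam - f^*(A^T lam)].  The ray [nu + alpha eta] lies in the
   range of [A^T]; writing [nu = A^T lam0] and [nu + eta = A^T lam1], the ray
   [lam0 + alpha (lam1 - lam0)] is mapped onto it by [A^T] and has a nonzero
   direction because [eta != 0].  By the chain rule, the gradient of [g] along
   it is [b - A G], where [G] is the constant gradient of [f^*] on the ray. *)

Lemma lsc_bounded_below_compact (R : realType) (T : topologicalType)
    (K : set T) (phi : T -> R) :
  compact K -> lower_semicontinuous (fun x => (phi x)%:E) ->
  exists M, forall x, K x -> M <= phi x.
Proof.
rewrite compact_near_coveringP => cov lsc.
have near_lb x : K x ->
    \forall x' \near x & M \near pinfty_nbhs R, - M < phi x'.
  move=> _; have : ((phi x - 1)%:E < (phi x)%:E)%E.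
    by rewrite lte_fin ltrBlDr ltrDl.
  case/lsc => V Vx ltV; exists (V, [set M | 1 - phi x < M]) => /=.
    by split=> //; exists (1 - phi x); split; first exact: num_real.
  by case=> x' M /= [/ltV]; rewrite lte_fin; lra.
have [M [_ HM]] := cov R _ (fun M x => - M < phi x) _ near_lb.
exists (- (M + 1)) => x Kx.
by have := HM (M + 1) _ x Kx; rewrite ltrDl ltr01 => /(_ isT); lra.
Qed.

Lemma compact_norm_bounded (R : realType) (V : normedModType R) (Y : set V) :
  compact Y -> exists B, forall y, Y y -> `|y| <= B.
Proof.
move=> /compact_bounded [B [_ HB]].
by exists (B + 1) => y Yy; apply: HB Yy; rewrite ltrDl.
Qed.

Section EuclideanProduct.
Variable R : realType.

Lemma dotvC n (u v : 'cV[R]_n) : dotv u v = dotv v u.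
Proof. by apply: eq_bigr => i _; rewrite mulrC. Qed.

Lemma dotvDl n (u w v : 'cV[R]_n) : dotv (u + w) v = dotv u v + dotv w v.
Proof. by rewrite /dotv -big_split; apply: eq_bigr => i _; rewrite mxE mulrDl. Qed.

Lemma dotvBr n (v u w : 'cV[R]_n) : dotv v (u - w) = dotv v u - dotv v w.
Proof. by rewrite /dotv -sumrB; apply: eq_bigr => i _; rewrite !mxE mulrBr. Qed.

Lemma dotv_mulmx m n (A : 'M[R]_(m, n)) lam y :
  dotv lam (A *m y) = dotv (A^T *m lam) y.
Proof.
rewrite /dotv; under eq_bigr do rewrite mxE big_distrr.
under [RHS]eq_bigr do rewrite mxE big_distrl.
rewrite exchange_big /=; apply: eq_bigr => j _; apply: eq_bigr => i _.
by rewrite mxE; ring.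
Qed.

Lemma coord_le_mx_norm n (y : 'cV[R]_n) i : `|y i 0| <= `|y|.
Proof. by rewrite [`|y|]mx_normrE; apply: le_trans (le_bigmax _ _ (i, 0)). Qed.

Lemma dotv_le_mx_norm n (u v : 'cV[R]_n) :
  `|dotv u v| <= (\sum_i `|u i 0|) * `|v|.
Proof.
rewrite /dotv mulr_suml; apply: le_trans (ler_norm_sum _ _ _) _.
apply: ler_sum => i _; rewrite normrM; apply: ler_wpM2l => //.
exact: coord_le_mx_norm.
Qed.

Lemma norm2_ge0 n (v : 'cV[R]_n) : 0 <= norm2 v.
Proof. exact: sqrtr_ge0. Qed.

Lemma coord_le_norm2 n (v : 'cV[R]_n) i : `|v i 0| <= norm2 v.
Proof.
rewrite -sqrtr_sqr /norm2 /dotv; apply: ler_wsqrtr.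
rewrite (bigD1 i) //= expr2 ler_wpDr //.
by apply: sumr_ge0 => j _; rewrite -expr2 sqr_ge0.
Qed.

Lemma norm2_le_sum_norm n (v : 'cV[R]_n) : norm2 v <= \sum_i `|v i 0|.
Proof.
have [sum_ge0 dot_le] : 0 <= \sum_i `|v i 0| /\
    dotv v v <= (\sum_i `|v i 0|) ^+ 2.
  rewrite /dotv; elim/big_rec2: _ => [|i s t _ [t_ge0 s_le]].
    by rewrite expr0n.
  split; first by rewrite addr_ge0.
  have vi_ge0 : 0 <= `|v i 0| by [].
  have -> : v i 0 * v i 0 = `|v i 0| ^+ 2 by rewrite real_normK ?num_real.
  nra.
by rewrite -(ger0_norm sum_ge0) -sqrtr_sqr; apply: ler_wsqrtr.
Qed.

Lemma norm2_mulmx_le m n (M : 'M[R]_(m, n)) :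
  exists2 C, 0 < C & forall h, norm2 (M *m h) <= C * norm2 h.
Proof.
have sum_ge0 : 0 <= \sum_j \sum_i `|M j i|.
  by apply: sumr_ge0 => j _; apply: sumr_ge0.
exists (1 + \sum_j \sum_i `|M j i|) => [|h]; first lra.
apply: le_trans (norm2_le_sum_norm _) _.
apply: (@le_trans _ _ ((\sum_j \sum_i `|M j i|) * norm2 h)); last first.
  by rewrite ler_wpM2r ?norm2_ge0 // lerDr.
rewrite mulr_suml; apply: ler_sum => j _; rewrite mxE mulr_suml.
apply: le_trans (ler_norm_sum _ _ _) _; apply: ler_sum => i _.
by rewrite normrM ler_wpM2l //; apply: coord_le_norm2.
Qed.

End EuclideanProduct.

Section Gradient.
Variable R : realType.

Lemma is_gradient_comp_trmx m n (F : 'cV[R]_n -> R) (M : 'M[R]_(m, n)) x G :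
  is_gradient F (M^T *m x) G -> is_gradient (fun l => F (M^T *m l)) x (M *m G).
Proof.
move=> gradF eps eps_gt0.
have [C C_gt0 normMT] := norm2_mulmx_le M^T.
have [d d_gt0 Hd] := gradF (eps / C) (divr_gt0 eps_gt0 C_gt0).
exists (d / C) => [|h h_lt]; first exact: divr_gt0.
have MTh_lt : norm2 (M^T *m h) < d.
  apply: le_lt_trans (normMT h) _.
  by rewrite -ltr_pdivlMl // mulrC.
have := Hd _ MTh_lt; rewrite mulmxDr dotv_mulmx trmxK => /le_trans; apply.
by rewrite -mulrA ler_pM2l // mulrC ler_pdivrMr // mulrC normMT.
Qed.

Lemma is_gradient_dotv_sub n (F : 'cV[R]_n -> R) (c x G : 'cV[R]_n) :
  is_gradient F x G -> is_gradient (fun l => dotv l c - F l) x (c - G).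
Proof.
move=> gradF eps /gradF [d d_gt0 Hd]; exists d => // h /Hd Fh.
rewrite dotvDl (dotvC (c - G)) dotvBr (dotvC h c) (dotvC h G).
by rewrite [X in `|X|](_ : _ = - (F (x + h) - F x - dotv G h)) ?normrN //; ring.
Qed.

End Gradient.

Section IndicatorConjugate.
Variables (R : realType) (n : nat) (f0 : 'cV[R]_n -> R) (Y : set 'cV[R]_n).
Hypotheses (f0_lsc : lower_semicontinuous (fun y => (f0 y)%:E))
  (Y_compact : compact Y) (Y_neq0 : Y !=set0).

Lemma dotv_sub_bounded_above nu :
  exists c, forall y, Y y -> dotv nu y - f0 y <= c.
Proof.
have [lb f0_ge] := lsc_bounded_below_compact Y_compact f0_lsc.
have [B Y_le] := compact_norm_bounded Y_compact.
have sum_ge0 : 0 <= \sum_i `|nu i 0| by apply: sumr_ge0.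
exists ((\sum_i `|nu i 0|) * B - lb) => y Yy.
have := ler_wpM2l sum_ge0 (Y_le y Yy).
have := dotv_le_mx_norm nu y; have := ler_norm (dotv nu y).
have := f0_ge y Yy; lra.
Qed.

Lemma conj_fun_indic_sumE nu :
  (conj_fun (indic_sum f0 Y) nu)%:E =
  ereal_sup [set (dotv nu y - f0 y)%:E | y in Y].
Proof.
rewrite /conj_fun; have -> : [set ((dotv nu x)%:E - indic_sum f0 Y x)%E
          | x in [set x | indic_sum f0 Y x \is a fin_num]] =
          [set (dotv nu y - f0 y)%:E | y in Y].
  rewrite /indic_sum; apply/seteqP; split=> _ [y /= Yy <-].
    by case: (asboolP (Y y)) Yy => // Yy _; exists y.
  by exists y; rewrite /= asboolT.
have [c ub] := dotv_sub_bounded_above nu; have [y0 Yy0] := Y_neq0.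
rewrite fineK // fin_numElt; apply/andP; split.
  apply: (@lt_le_trans _ _ (dotv nu y0 - f0 y0)%:E); first exact: ltNyr.
  by apply: ereal_sup_ubound; exists y0.
apply: (@le_lt_trans _ _ c%:E); last exact: ltry.
by apply: ge_ereal_sup => _ [y Yy <-]; rewrite lee_fin ub.
Qed.

Lemma conj_fun_indic_sum_ge nu y :
  Y y -> dotv nu y - f0 y <= conj_fun (indic_sum f0 Y) nu.
Proof.
by move=> Yy; rewrite -lee_fin conj_fun_indic_sumE; apply: ereal_sup_ubound; exists y.
Qed.

Lemma conj_fun_indic_sum_approx nu e : 0 < e ->
  exists2 y, Y y & conj_fun (indic_sum f0 Y) nu - e < dotv nu y - f0 y.
Proof.
move=> e_gt0; have : ((conj_fun (indic_sum f0 Y) nu - e)%:E <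
                      (conj_fun (indic_sum f0 Y) nu)%:E)%E.
  by rewrite lte_fin ltrBlDr ltrDl.
by rewrite conj_fun_indic_sumE => /ereal_sup_gt [_ [y Yy <-]]; exists y.
Qed.

Lemma dual_fun_indic_sumE m (A : 'M[R]_(m, n)) b :
  dual_fun (indic_sum f0 Y) A b =
  (fun lam => dotv lam b - conj_fun (indic_sum f0 Y) (A^T *m lam)).
Proof.
apply: funext => lam; rewrite /dual_fun.
set s := conj_fun _ _.
have dotvA y : dotv lam (A *m y - b) = dotv (A^T *m lam) y - dotv lam b.
  by rewrite dotvBr dotv_mulmx.
suff -> : ereal_inf [set (indic_sum f0 Y y - (dotv lam (A *m y - b))%:E)%E
                    | y in setT] = (dotv lam b - s)%:E by [].
apply/le_anti/andP; split.
  apply/lee_addgt0Pr => e /(conj_fun_indic_sum_approx (A^T *m lam)) [y Yy lt_y].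
  apply: le_trans (ereal_inf_lbound _) _; first by exists y.
  by move: lt_y; rewrite /indic_sum asboolT // -!EFinD lee_fin dotvA -/s; lra.
apply: le_ereal_inf_tmp => _ [y _ <-]; rewrite /indic_sum.
case: (asboolP (Y y)) => [Yy|_]; last by rewrite leey.
have := conj_fun_indic_sum_ge (A^T *m lam) Yy.
by rewrite -EFinD lee_fin dotvA -/s; lra.
Qed.

End IndicatorConjugate.

Theorem corollary1 (R : realType) (m n : nat)
  (f0 : 'cV[R]_n -> R) (Y : set 'cV[R]_n)
  (A : 'M[R]_(m, n)) (b : 'cV[R]_m)
  (Hf0lsc : lower_semicontinuous (fun y => (f0 y)%:E))
  (Hf0sc : strictly_convex f0)
  (HYconv : convex_setv Y) (HYcpt : compact Y) (HYne : Y !=set0)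
  (Hmn : (m < n)%N) (HrkA : \rank A = m)
  (Hbnd : forall ybar, (closure Y `\` Y°) ybar ->
     exists (yk nuk : nat -> 'cV[R]_n),
       [/\ forall k, Y (yk k),
           yk @ \oo --> ybar,
           forall k, subdiff (indic_sum f0 Y) (yk k) (nuk k)
         & exists M : R, \forall k \near \oo, norm2 (nuk k) <= M])
  (nu eta : 'cV[R]_n)
  (Heta : eta != 0)
  (Hray : forall alpha : R, 0 <= alpha ->
     ~ (closure [set v | exists2 y, Y° y & subdiff (fun x => (f0 x)%:E) y v])°
         (nu + alpha *: eta)
     /\ (exists lam : 'cV[R]_m, nu + alpha *: eta = A^T *m lam))
  (Hgradconst : exists G : 'cV[R]_n, forall alpha : R, 0 <= alpha ->
     is_gradient (conj_fun (indic_sum f0 Y)) (nu + alpha *: eta) G) :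
  exists (lam mu : 'cV[R]_m), mu != 0 /\
    exists G : 'cV[R]_m, forall alpha : R, 0 <= alpha ->
      is_gradient (dual_fun (indic_sum f0 Y) A b) (lam + alpha *: mu) G.
Proof.
have [_ [lam0]] := Hray 0 (lexx 0); rewrite scale0r addr0 => nuE.
have [_ [lam1]] := Hray 1 ler01; rewrite scale1r => nu_etaE.
have etaE : eta = A^T *m (lam1 - lam0).
  by rewrite mulmxBr -nu_etaE -nuE (addrC nu eta) addrK.
have rayE alpha : A^T *m (lam0 + alpha *: (lam1 - lam0)) = nu + alpha *: eta.
  by rewrite mulmxDr -scalemxAr -etaE -nuE.
exists lam0, (lam1 - lam0); split.
  by apply: contraNneq Heta => mu0; rewrite etaE mu0 mulmx0.
have [G gradG] := Hgradconst.
exists (b - A *m G) => alpha alpha_ge0.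
rewrite dual_fun_indic_sumE //.
apply: is_gradient_dotv_sub; apply: is_gradient_comp_trmx.
by rewrite rayE; apply: gradG.
Qed.
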